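(* (i) If the language $L(\mathcal{A})$ accepted by the NFA $\mathcal{A}$ is finite, then $\mathcal{H}_\kappa(L_1,L_2)$ is regular. (ii) If $L(\mathcal{A})$ is infinite and either $L_1$ is finite or $L_2$ is finite, then $\mathcal{H}_\kappa(L_1,L_2)$ is not regular.
   Context: $\Sigma$ is a finite alphabet with at least two letters with an involution $a\mapsto\bar a$ ($\bar{\bar a}=a$), extended to words by $\overline{a_1\cdots a_m}=\bar a_m\cdots\bar a_1$ and to languages elementwise. $\kappa$ is a fixed positive integer. $\mathcal{H}_\kappa(L_1,L_2)=\{\gamma\alpha\beta\bar\alpha\bar\gamma:|\alpha|\ge\kappa,\ \gamma\alpha\beta\bar\alpha\in L_1\text{ or }\alpha\beta\bar\alpha\bar\gamma\in L_2\}$. $L_1,L_2$ are regular; $\mathcal{A}_1=(Q_1,\Sigma,E_1,\{q_{01}\},F_1)$ is a complete DFA accepting $L_1$, $\mathcal{A}_2=(Q_2,\Sigma,E_2,\{q_{02}\},F_2)$ a complete DFA accepting $\overline{L_2}$; $p\cdot w$ is the state reached from $p$ on $w$. Construction of $\mathcal{A}$: $Q_{12}=\{(q_{01}\cdot w,q_{02}\cdot w):w\in\Sigma^*\}$ with $(p_1,p_2)\cdot w=(p_1\cdot w,p_2\cdot w)$. For $(p_1,p_2,q_1,q_2)\in Q_1\times Q_2\times Q_1\times Q_2$ let $B(p_1,p_2,q_1,q_2)=\{w:p_1\cdot w=q_1,\ p_2\cdot\bar w=q_2\}$; the quadruple is a basic bridge if this set is nonempty. States of $\mathcal{A}$ are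 all $((p_1,p_2),q_1,q_2,\ell)$ with $(p_1,p_2)\in Q_{12}$, $q_i\in Q_i$, $\ell\in\{0,\dots,\kappa\}$, $(p_1,p_2,q_1,q_2)$ a basic bridge. For $a\in\Sigma$, $P\in Q_{12}$, $q_i\in Q_i$, there is an $a$-arc from $(P,q_1\cdot\bar a,q_2\cdot\bar a,\ell)$ to $(P\cdot a,q_1,q_2,\ell')$, provided both are states, exactly when: $\ell=\ell'=0$ and $q_1\cdot\bar a\notin F_1$, $q_2\cdot\bar a\notin F_2$; or $\ell=0,\ell'=1$ and ($q_1\cdot\bar a\in F_1$ or $q_2\cdot\bar a\in F_2$); or $1\le\ell<\kappa$ and $\ell'=\ell+1$. Initial states: $((q_{01},q_{02}),q_1',q_2',0)$; final states: those with $\ell=\kappa$. Finally, $\mathcal{A}$ is trimmed: states not reachable from an initial state, or from which no final state is reachable, are removed. *)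

From mathcomp Require Import all_boot.
Set Implicit Arguments. Unset Strict Implicit. Unset Printing Implicit Defensive.

Definition language (S : Type) := seq S -> Prop.

Definition finite_lang (S : eqType) (L : language S) : Prop :=
  exists s : seq (seq S), forall w, L w -> w \in s.

Definition wbar (S : Type) (bar : S -> S) (w : seq S) : seq S := rev (map bar w).

Record dfa (S : Type) := DFA {
  dstate : finType;
  dinit : dstate;
  dtrans : dstate -> S -> dstate;
  dfinal : {set dstate} }.

Definition dstar (S : Type) (A : dfa S) (p : dstate A) (w : seq S) : dstate A :=
  foldl (@dtrans S A) p w.

Definition dlang (S : Type) (A : dfa S) : language S :=
  fun w => dstar (dinit A) w \in dfinal A.

Definition regular (S : Type) (L : language S) : Prop :=
  exists A : dfa S, forall w, L w <-> dlang A w.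

Definition hairpin (S : Type) (bar : S -> S) (kappa : nat) (L1 L2 : language S)
  : language S :=
  fun w => exists g a b : seq S,
    w = g ++ a ++ b ++ wbar bar a ++ wbar bar g /\ kappa <= size a /\
    (L1 (g ++ a ++ b ++ wbar bar a) \/ L2 (a ++ b ++ wbar bar a ++ wbar bar g)).

(* The NFA construction A from A1 (accepting L1) and A2 (accepting bar L2). *)
Section Construction.
Variables (S : Type) (bar : S -> S) (kappa : nat) (A1 A2 : dfa S).

Definition Q12 (P : dstate A1 * dstate A2) : Prop :=
  exists w, P = (dstar (dinit A1) w, dstar (dinit A2) w).

Definition basic_bridge (p1 : dstate A1) (p2 : dstate A2)
  (q1 : dstate A1) (q2 : dstate A2) : Prop :=
  exists w, dstar p1 w = q1 /\ dstar p2 (wbar bar w) = q2.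

Definition nstate : Type := ((dstate A1 * dstate A2) * dstate A1 * dstate A2 * nat)%type.

Definition is_state (s : nstate) : Prop :=
  let: (P, q1, q2, l) := s in Q12 P /\ basic_bridge P.1 P.2 q1 q2 /\ l <= kappa.

Definition arc (a : S) (s t : nstate) : Prop :=
  exists (P : dstate A1 * dstate A2) (q1 : dstate A1) (q2 : dstate A2) (l l' : nat),
    s = (P, dtrans q1 (bar a), dtrans q2 (bar a), l) /\
    t = ((dtrans P.1 a, dtrans P.2 a), q1, q2, l') /\
    is_state s /\ is_state t /\
    [\/ [/\ l = 0, l' = 0, dtrans q1 (bar a) \notin dfinal A1
                          & dtrans q2 (bar a) \notin dfinal A2],
        [/\ l = 0, l' = 1 & (dtrans q1 (bar a) \in dfinal A1) \/
                            (dtrans q2 (bar a) \in dfinal A2)]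
      | [/\ 1 <= l, l < kappa & l' = l.+1]].

Definition initial_state (s : nstate) : Prop :=
  exists q1 q2, s = ((dinit A1, dinit A2), q1, q2, 0) /\ is_state s.

Definition final_state (s : nstate) : Prop := is_state s /\ s.2 = kappa.

Fixpoint accepts_from (s : nstate) (w : seq S) : Prop :=
  match w with
  | [::] => final_state s
  | a :: w' => exists t, arc a s t /\ accepts_from t w'
  end.

(* L(A): words labelling a path from an initial to a final state.
   (Trimming does not change the accepted language.) *)
Definition nfa_lang : language S :=
  fun w => exists s, initial_state s /\ accepts_from s w.

End Construction.

From Pilot Require Import Defs.
From mathcomp Require Import all_boot.
From Stdlib Require Import Classical ClassicalEpsilon.
From mathcomp Require Import zify.
Set Implicit Arguments. Unset Strict Implicit. Unset Printing Implicit Defensive.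

(* Every hairpin splits as u b u-bar with u = gamma alpha, |alpha| = kappa;
   the words u of L(A) are exactly those for which this split is admissible
   while no longer stem alpha is.  If L(A) is finite, the hairpin language is
   thus a finite union of languages u B_u u-bar with B_u regular.
   If L(A) is infinite, pick u in L(A) much longer than the number of state
   tuples visited by both automata; pigeonhole gives u = x y r such that y is
   a loop after x in A1 and A2, and y-bar a loop after the corresponding
   states reached reading back.  Then x y^k r b r-bar y-bar^k x-bar is a
   hairpin for every k, while for l much larger than k the word
   x y^l r b r-bar y-bar^k x-bar (or its mirror) is not: one side of any
   hairpin factorisation is longer than every word of the finite L_i, and
   on the other side the maximality of the stem of u forbids acceptance of
   long prefixes.  A DFA for the hairpin language would identify x y^k with
   x y^l for some such pair. *)

Section Words.
Variables (S : Type) (bar : S -> S).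
Hypothesis Hbar : involutive bar.
Local Notation wb := (wbar bar).

Lemma wbar_cat (u v : seq S) : wb (u ++ v) = wb v ++ wb u.
Proof. by rewrite /wbar map_cat rev_cat. Qed.

Lemma wbar_cons a (u : seq S) : wb (a :: u) = wb u ++ [:: bar a].
Proof. by rewrite /wbar /= rev_cons cats1. Qed.

Lemma size_wbar (u : seq S) : size (wb u) = size u.
Proof. by rewrite /wbar size_rev size_map. Qed.

Lemma take_wbar m (u : seq S) : take m (wb u) = wb (drop (size u - m) u).
Proof. by rewrite /wbar take_rev size_map map_drop. Qed.

Lemma wbarK : involutive wb.
Proof. by move=> u; rewrite /wbar map_rev revK -map_comp (eq_map Hbar) map_id. Qed.

Lemma wbar_inj : injective wb.
Proof. exact: can_inj wbarK. Qed.

End Words.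

Lemma drop_size_addn_cat (T : Type) (s t : seq T) k : drop (size s + k) (s ++ t) = drop k t.
Proof. by rewrite drop_cat ltnNge leq_addr /= addKn. Qed.

Fixpoint wpow (T : Type) (y : seq T) (k : nat) : seq T :=
  if k is k'.+1 then y ++ wpow y k' else [::].

Lemma size_wpow (T : Type) (y : seq T) k : size (wpow y k) = k * size y.
Proof. by elim: k => //= k IH; rewrite size_cat IH mulSn. Qed.

Lemma wpowSr (T : Type) (y : seq T) k : wpow y k.+1 = wpow y k ++ y.
Proof. by elim: k => [|k IH] /=; rewrite ?cats0 // -catA -IH. Qed.

Lemma wbar_wpow (S : Type) (bar : S -> S) (y : seq S) k :
  wbar bar (wpow y k) = wpow (wbar bar y) k.
Proof. by elim: k => // k IH; rewrite [wpow y _]/= wbar_cat IH -wpowSr. Qed.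

Section DfaRuns.
Variables (S : Type) (A : dfa S).

Lemma dstar_cat (p : dstate A) u v : dstar p (u ++ v) = dstar (dstar p u) v.
Proof. exact: foldl_cat. Qed.

Lemma dstar_rcons (p : dstate A) u a : dstar p (rcons u a) = dtrans (dstar p u) a.
Proof. exact: foldl_rcons. Qed.

Lemma dstar_wpow (q : dstate A) y k : dstar q y = q -> dstar q (wpow y k) = q.
Proof. by move=> Hq; elim: k => //= k IH; rewrite dstar_cat Hq IH. Qed.

Lemma dstar_take_wpow (q : dstate A) y t l n : dstar q y = q ->
  (exists2 m, m <= size y & dstar q (take n (wpow y l ++ t)) = dstar q (take m y)) \/
  (exists2 m, m <= size t & dstar q (take n (wpow y l ++ t)) = dstar q (take m t)).
Proof.
move=> Hy; elim: l n => [|l IH] n /=.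
  by right; exists (minn n (size t)); rewrite ?geq_minr // take_min take_size.
rewrite -catA take_cat; case: ltnP => H; first by left; exists n => //; apply: ltnW.
by rewrite dstar_cat Hy; apply: IH.
Qed.

End DfaRuns.

Lemma pigeon_nat (T : finType) (f : nat -> T) (n : nat) :
  #|T| < n -> exists i j, i < j < n /\ f i = f j.
Proof.
move=> Hn; pose g (i : 'I_n) := f i.
have /injectivePn [i [j Hij Eij]] : ~~ injectiveb g.
  by apply/injectiveP => /leq_card; rewrite card_ord leqNgt Hn.
case: (ltngtP i j) => [H|H|/val_inj Eq]; last by rewrite Eq eqxx in Hij.
- by exists i, j; rewrite H ltn_ord.
- by exists j, i; rewrite H ltn_ord.
Qed.

Lemma pigeon_gap (T : finType) (f : nat -> T) B0 c :
  exists l1 l2, [/\ B0 <= l1, l1 + c < l2 & f l1 = f l2].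
Proof.
have [t1 [t2 [/andP [H12 _] E]]] := pigeon_nat (fun t => f (B0 + t * c.+1)) (ltnSn #|T|).
exists (B0 + t1 * c.+1), (B0 + t2 * c.+1); split=> //; first exact: leq_addr.
have : t1.+1 * c.+1 <= t2 * c.+1 by rewrite leq_mul2r.
rewrite mulSn; lia.
Qed.

Lemma finite_lang_bounded (S : eqType) (L : language S) :
  finite_lang L -> exists M, forall w, L w -> size w <= M.
Proof.
move=> [s Hs]; exists (\max_(w <- s) size w) => w /Hs ws.
exact: leq_bigmax_seq.
Qed.

Lemma bounded_words_finite (S : finType) n :
  exists s : seq (seq S), forall w, size w <= n -> w \in s.
Proof.
elim: n => [|n [s Hs]].
  by exists [:: [::]] => w; rewrite leqn0 size_eq0 => /eqP ->; rewrite mem_head.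
exists ([::] :: [seq a :: w | a <- enum S, w <- s]) => [[|a w]] Hw; first exact: mem_head.
by rewrite inE; apply/orP; right; apply: allpairs_f; [rewrite mem_enum | apply: Hs].
Qed.

Lemma infinite_lang_long_word (S : finType) (L : language S) :
  ~ finite_lang L -> forall N, exists u, L u /\ N <= size u.
Proof.
move=> Hinf N; apply: NNPP => Hno; apply: Hinf.
have [s Hs] := bounded_words_finite S N.
exists s => w Hw; apply: Hs; rewrite leqNgt; apply/negP => H; apply: Hno.
by exists w; split=> //; apply: ltnW.
Qed.

Definition nerode_finite (S : Type) (L : language S) :=
  exists (T : finType) (g : seq S -> T),
    forall x y, g x = g y -> forall v, L (x ++ v) <-> L (y ++ v).

Definition asbool (P : Prop) : bool := if excluded_middle_informative P then true else false.

Lemma asboolP (P : Prop) : asbool P <-> P.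
Proof. by rewrite /asbool; case: excluded_middle_informative. Qed.

Lemma nerode_finite_regular (S : Type) (L : language S) : nerode_finite L -> regular L.
Proof.
move=> [T [g Hg]].
pose rep (t : T) : seq S :=
  match excluded_middle_informative (exists x, g x = t) with
  | left H => proj1_sig (constructive_indefinite_description _ H)
  | right _ => [::] end.
have Hrep x : g (rep (g x)) = g x.
  rewrite /rep; case: excluded_middle_informative => [H|H]; last by case: H; exists x.
  by case: constructive_indefinite_description.
pose D := DFA (g [::]) (fun t a => g (rcons (rep t) a)) [set t | asbool (L (rep t))].
have Inv w : exists x, dstar (dinit D) w = g x /\ forall v, L (x ++ v) <-> L (w ++ v).
  elim/last_ind: w => [|w a [x [Hx Hxv]]]; first by exists [::].
  exists (rcons (rep (g x)) a); split; first by rewrite dstar_rcons Hx.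
  by move=> v; rewrite !cat_rcons (Hg _ _ (Hrep x)) Hxv.
exists D => w; rewrite /dlang; have [x [-> Hx]] := Inv w.
by rewrite inE asboolP -[rep _]cats0 (Hg _ _ (Hrep x) [::]) Hx cats0.
Qed.

Section NerodeClosure.
Variable S : Type.

Lemma nerode_finite_ext (L L' : language S) :
  (forall w, L w <-> L' w) -> nerode_finite L -> nerode_finite L'.
Proof. by move=> E [T [g Hg]]; exists T, g => x y H v; rewrite -!E; apply: Hg. Qed.

Lemma nerode_finite0 : nerode_finite (fun _ : seq S => False).
Proof. by exists unit, (fun _ => tt). Qed.

Lemma nerode_finiteU (L1 L2 : language S) :
  nerode_finite L1 -> nerode_finite L2 -> nerode_finite (fun w => L1 w \/ L2 w).
Proof.
move=> [T1 [g1 H1]] [T2 [g2 H2]]; exists (T1 * T2)%type, (fun x => (g1 x, g2 x)).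
by move=> x y [/H1 E1 /H2 E2] v; rewrite E1 E2.
Qed.

Lemma nerode_finite_bigU (X : eqType) (s : seq X) (F : X -> language S) :
  (forall x, x \in s -> nerode_finite (F x)) ->
  nerode_finite (fun w => exists x, x \in s /\ F x w).
Proof.
elim: s => [|x s IH] H.
  by apply: nerode_finite_ext nerode_finite0 => w; split=> // [[x []]].
have IHs : nerode_finite (fun w => exists y, y \in s /\ F y w).
  by apply: IH => y Hy; apply: H; rewrite inE Hy orbT.
apply: nerode_finite_ext (nerode_finiteU (H x (mem_head x s)) IHs) => w; split.
  by move=> [Hx|[y [Hy Hw]]]; [exists x; rewrite mem_head | exists y; rewrite inE Hy orbT].
by move=> [y []]; rewrite inE => /orP [/eqP -> | Hy] Hw; [left | right; exists y].
Qed.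

Lemma nerode_finite_rcons (a : S) (B : language S) :
  nerode_finite B -> nerode_finite (fun w => exists v, w = rcons v a /\ B v).
Proof.
move=> [T [g Hg]].
exists (T * bool)%type, (fun x => (g x, asbool (exists v, x = rcons v a /\ B v))).
have E z v' c : (exists v, z ++ rcons v' c = rcons v a /\ B v) <-> c = a /\ B (z ++ v').
  split=> [[v []]|[-> H]]; last by exists (z ++ v'); rewrite -rcons_cat.
  by rewrite -rcons_cat => /rcons_inj [-> ->].
move=> x y [/Hg Hxy Hf] v; case/lastP: v => [|v c]; last by rewrite !E Hxy.
by rewrite !cats0; split=> /asboolP H; apply/asboolP; rewrite ?Hf // -Hf.
Qed.

Lemma nerode_finite_catr (z : seq S) (B : language S) :
  nerode_finite B -> nerode_finite (fun w => exists v, w = v ++ z /\ B v).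
Proof.
move=> HB; elim/last_ind: z => [|z a IH].
  by apply: nerode_finite_ext HB => w; split=> [H|[v [-> H]]]; [exists w|]; rewrite cats0.
apply: nerode_finite_ext (nerode_finite_rcons a IH) => w; split.
  by move=> [v [-> [v' [-> H]]]]; exists v'; rewrite rcons_cat.
by move=> [v [-> H]]; exists (v ++ z); rewrite rcons_cat; split=> //; exists v.
Qed.

End NerodeClosure.

Lemma nerode_finite_cons (S : finType) (a : S) (B : language S) :
  nerode_finite B -> nerode_finite (fun w => exists v, w = a :: v /\ B v).
Proof.
move=> [T [g Hg]].
exists (option (bool * T)), (fun x => if x is c :: x' then Some (c == a, g x') else None).
have E c z v : (exists v', c :: z ++ v = a :: v' /\ B v') <-> c = a /\ B (z ++ v).
  by split=> [[v' [[-> <-] H]] //|[-> H]]; exists (z ++ v).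
move=> [|c x] [|d y] //= [Ecd /Hg Exy] v; rewrite !E Exy.
by split=> -[Ea HB]; move: Ecd; rewrite Ea eqxx; [move/esym|]; move/eqP=> ->.
Qed.

Lemma nerode_finite_catl (S : finType) (u : seq S) (B : language S) :
  nerode_finite B -> nerode_finite (fun w => exists v, w = u ++ v /\ B v).
Proof.
move=> HB; elim: u => [|a u IH].
  by apply: nerode_finite_ext HB => w; split=> [H|[v [-> H]]] //; exists w.
apply: nerode_finite_ext (nerode_finite_cons a IH) => w; split.
  by move=> [v [-> [v' [-> H]]]]; exists v'.
by move=> [v [-> H]]; exists (u ++ v); split=> //; exists v.
Qed.

Section NfaRuns.
Variables (S : Type) (bar : S -> S).
Hypothesis Hbar : involutive bar.
Variable kappa : nat.
Hypothesis Hkappa : 0 < kappa.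
Variables A1 A2 : dfa S.
Local Notation wb := (wbar bar).

(* With gamma = take i u and alpha = drop i u: from (p1, p2) = (q01, q02),
   the first disjunct is gamma alpha b alpha-bar \in L1 and the second
   is alpha b alpha-bar gamma-bar \in L2, read mirrored by A2. *)
Definition hcond (p1 : dstate A1) (p2 : dstate A2) (b u : seq S) (i : nat) : bool :=
  (dstar p1 (u ++ b ++ wb (drop i u)) \in dfinal A1) ||
  (dstar p2 (u ++ wb b ++ wb (drop i u)) \in dfinal A2).

(* What a run of A from ((p1, p2), q1, q2, l) reading u guarantees: counter 0
   means the stem of length kappa is admissible and no longer stem is;
   a positive counter l means exactly kappa - l letters of the stem remain. *)
Definition run_inv p1 p2 b u l : Prop :=
  if l == 0 then [/\ kappa <= size u, hcond p1 p2 b u (size u - kappa) &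
                    forall i, i < size u - kappa -> ~~ hcond p1 p2 b u i]
  else l + size u = kappa.

Lemma dstar_wbar_cons (A : dfa S) (p : dstate A) a u b :
  dstar p (u ++ b ++ wb (a :: u)) = dtrans (dstar p (u ++ b ++ wb u)) (bar a).
Proof. by rewrite wbar_cons !catA cats1 dstar_rcons -!catA. Qed.

Lemma dstar_cons_wbar_cons (A : dfa S) (p : dstate A) a u b :
  dstar p ((a :: u) ++ b ++ wb (a :: u)) = dtrans (dstar (dtrans p a) (u ++ b ++ wb u)) (bar a).
Proof. exact: dstar_wbar_cons. Qed.

Lemma hcond0 p1 p2 b a u :
  hcond p1 p2 b (a :: u) 0 =
  (dstar p1 ((a :: u) ++ b ++ wb (a :: u)) \in dfinal A1) ||
  (dstar p2 ((a :: u) ++ wb b ++ wb (a :: u)) \in dfinal A2).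
Proof. by []. Qed.

Lemma hcondS p1 p2 b a u i :
  hcond p1 p2 b (a :: u) i.+1 = hcond (dtrans p1 a) (dtrans p2 a) b u i.
Proof. by []. Qed.

Lemma accepts_from_run_inv (u : seq S) P q1 q2 l :
  accepts_from bar kappa (P, q1, q2, l) u ->
  exists b, [/\ q1 = dstar P.1 (u ++ b ++ wb u),
                q2 = dstar P.2 (u ++ wb b ++ wb u) & run_inv P.1 P.2 b u l].
Proof.
elim: u P q1 q2 l => [|a u IH] P q1 q2 l /=.
  move=> [[HQ [[b [E1 E2]] Hl]] /= ->]; exists b; rewrite /run_inv /= !cats0.
  by split=> //; rewrite (negbTE (lt0n_neq0 Hkappa)) addn0.
move=> [t [[P' [q1' [q2' [l0 [l' [[-> -> -> ->] [-> [_ [_ Hc]]]]]]]]] Hacc]].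
have [b [E1 E2 Hrun]] := IH _ _ _ _ Hacc.
exists b; split; rewrite ?dstar_wbar_cons -?E1 -?E2 //.
case: Hc Hrun => [[-> -> N1 N2]|[-> -> F12]|[Hl1 Hlk ->]]; rewrite /run_inv /=.
- move=> [Hk Hc Hn]; rewrite subSn //; split; [exact: leqW | by rewrite hcondS |].
  case=> [|i] Hi; last by rewrite hcondS; apply: Hn.
  by rewrite hcond0 !dstar_cons_wbar_cons -E1 -E2 (negbTE N1) (negbTE N2).
- rewrite add1n => <-; rewrite subnn; split=> //.
  by rewrite hcond0 !dstar_cons_wbar_cons -E1 -E2; case: F12 => ->; rewrite ?orbT.
- by rewrite (negbTE (lt0n_neq0 Hl1)) addnS -addSn.
Qed.

Lemma Q12_dtrans (p1 : dstate A1) (p2 : dstate A2) a :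
  Q12 (p1, p2) -> Q12 (dtrans p1 a, dtrans p2 a).
Proof. by move=> [z [-> ->]]; exists (rcons z a); rewrite !dstar_rcons. Qed.

Lemma is_state_run (p1 : dstate A1) (p2 : dstate A2) b u l :
  Q12 (p1, p2) -> l <= kappa ->
  is_state bar kappa ((p1, p2), dstar p1 (u ++ b ++ wb u), dstar p2 (u ++ wb b ++ wb u), l).
Proof.
move=> HQ Hl; split=> //; split=> //; exists (u ++ b ++ wb u); split=> //=.
by rewrite !wbar_cat wbarK // catA.
Qed.

Lemma arc_run (p1 : dstate A1) (p2 : dstate A2) b a u l l' :
  Q12 (p1, p2) -> l <= kappa -> l' <= kappa ->
  [\/ [/\ l = 0, l' = 0, dstar p1 ((a :: u) ++ b ++ wb (a :: u)) \notin dfinal A1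
                        & dstar p2 ((a :: u) ++ wb b ++ wb (a :: u)) \notin dfinal A2],
      [/\ l = 0, l' = 1 & (dstar p1 ((a :: u) ++ b ++ wb (a :: u)) \in dfinal A1) \/
                          (dstar p2 ((a :: u) ++ wb b ++ wb (a :: u)) \in dfinal A2)]
    | [/\ 1 <= l, l < kappa & l' = l.+1]] ->
  Defs.arc bar kappa a
    ((p1, p2), dstar p1 ((a :: u) ++ b ++ wb (a :: u)),
      dstar p2 ((a :: u) ++ wb b ++ wb (a :: u)), l)
    ((dtrans p1 a, dtrans p2 a), dstar (dtrans p1 a) (u ++ b ++ wb u),
      dstar (dtrans p2 a) (u ++ wb b ++ wb u), l').
Proof.
move=> HQ Hl Hl' Hc.
exists (p1, p2), (dstar (dtrans p1 a) (u ++ b ++ wb u)),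
       (dstar (dtrans p2 a) (u ++ wb b ++ wb u)), l, l'.
rewrite -!dstar_cons_wbar_cons; split=> //; split=> //; split; first exact: is_state_run.
by split=> //; apply: is_state_run => //; apply: Q12_dtrans.
Qed.

Lemma run_inv_accepts_from (u : seq S) p1 p2 b l :
  Q12 (p1, p2) -> l <= kappa -> run_inv p1 p2 b u l ->
  accepts_from bar kappa
    ((p1, p2), dstar p1 (u ++ b ++ wb u), dstar p2 (u ++ wb b ++ wb u), l) u.
Proof.
elim: u p1 p2 l => [|a u IH] p1 p2 l HQ Hl.
  rewrite /run_inv; case: eqP => [_ [/= Hk _ _]|_ /= Hk].
    by move: Hkappa; rewrite leqNgt ltnS Hk.
  by split; [exact: (is_state_run b [::] HQ Hl) | rewrite /= -Hk addn0].
pose F1 := dstar p1 ((a :: u) ++ b ++ wb (a :: u)) \in dfinal A1.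
pose F2 := dstar p2 ((a :: u) ++ wb b ++ wb (a :: u)) \in dfinal A2.
have step l' : l' <= kappa -> run_inv (dtrans p1 a) (dtrans p2 a) b u l' ->
    [\/ [/\ l = 0, l' = 0, ~~ F1 & ~~ F2], [/\ l = 0, l' = 1 & F1 \/ F2]
       | [/\ 1 <= l, l < kappa & l' = l.+1]] ->
    accepts_from bar kappa ((p1, p2), dstar p1 ((a :: u) ++ b ++ wb (a :: u)),
                            dstar p2 ((a :: u) ++ wb b ++ wb (a :: u)), l) (a :: u).
  move=> Hl' Hrun Hc; eexists; split; first exact: arc_run HQ Hl Hl' Hc.
  exact: IH (Q12_dtrans a HQ) Hl' Hrun.
rewrite /run_inv; case: eqP => [El [/= Hk Hc Hn] | /eqP Nl /= Hk].
  case: (ltngtP (size u).+1 kappa) Hk => // [Hlt | Heq] Hk.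
    apply: (step 0) => //; first split.
    - by rewrite -ltnS.
    - by move: Hc; rewrite subSn // hcondS.
    - by move=> i Hi; rewrite -hcondS; apply: Hn; rewrite subSn.
    have := Hn 0; rewrite subn_gt0 => /(_ Hlt).
    by rewrite hcond0 negb_or => /andP [N1 N2]; constructor 1; split.
  apply: (step 1) => //; move: Hc; rewrite -Heq subnn hcond0 => /orP H.
  by constructor 2; split.
apply: (step l.+1); rewrite /run_inv /=; try lia.
by constructor 3; split; lia.
Qed.

Lemma nfa_langE u :
  nfa_lang bar kappa A1 A2 u <-> exists b, run_inv (dinit A1) (dinit A2) b u 0.
Proof.
split=> [[s [[q1 [q2 [-> _]]] Hacc]]|[b Hb]].
  by have [b [_ _ H]] := accepts_from_run_inv Hacc; exists b.
have HQ : Q12 (dinit A1, dinit A2) by exists [::].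
exists ((dinit A1, dinit A2), dstar (dinit A1) (u ++ b ++ wb u),
        dstar (dinit A2) (u ++ wb b ++ wb u), 0).
split; last exact: run_inv_accepts_from.
by do 2 eexists; split; last exact: is_state_run.
Qed.

End NfaRuns.

Lemma nerode_finite_bridge (S : Type) (bar : S -> S) (A1 A2 : dfa S)
    (p1 : dstate A1) (p2 : dstate A2) e :
  nerode_finite (fun b => (dstar p1 (b ++ e) \in dfinal A1) ||
                          (dstar p2 (wbar bar b ++ e) \in dfinal A2)).
Proof.
exists (dstate A1 * {ffun dstate A2 -> bool})%type,
  (fun x => (dstar p1 x, [ffun q => dstar q (wbar bar x ++ e) \in dfinal A2])) => x y [E1 E2] v.
suff K z : (dstar p1 ((z ++ v) ++ e) \in dfinal A1) ||
           (dstar p2 (wbar bar (z ++ v) ++ e) \in dfinal A2)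
  = (dstar (dstar p1 z) (v ++ e) \in dfinal A1) ||
    [ffun q => dstar q (wbar bar z ++ e) \in dfinal A2] (dstar p2 (wbar bar v)).
  by rewrite !K E1 E2.
by rewrite ffunE wbar_cat -catA !dstar_cat.
Qed.

Section RegularCase.
Variables (S : finType) (bar : S -> S).
Hypothesis Hbar : involutive bar.
Variable kappa : nat.
Hypothesis Hkappa : 0 < kappa.
Variables (L1 L2 : language S) (A1 A2 : dfa S).
Hypothesis HA1 : forall w, dlang A1 w <-> L1 w.
Hypothesis HA2 : forall w, dlang A2 w <-> exists v, L2 v /\ w = wbar bar v.
Local Notation wb := (wbar bar).
Local Notation q01 := (dinit A1).
Local Notation q02 := (dinit A2).

Lemma L2_wbar z : L2 z <-> dlang A2 (wb z).
Proof.
split=> [H|/HA2 [v [Hv /(wbar_inj Hbar) ->]]] //.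
by apply/HA2; exists z.
Qed.

Lemma hcond_cat (p1 : dstate A1) (p2 : dstate A2) b u d j : j <= size u ->
  hcond bar p1 p2 (d ++ b ++ wb d) u j = hcond bar p1 p2 b (u ++ d) j.
Proof.
move=> Hj; rewrite /hcond; have -> : drop j (u ++ d) = drop j u ++ d.
  rewrite drop_cat; case: ltngtP Hj => // -> _.
  by rewrite subnn drop0 drop_oversize.
by rewrite !wbar_cat (wbarK Hbar) -!catA.
Qed.

Definition hairpin_at (u w : seq S) : Prop :=
  kappa <= size u /\ exists b, w = u ++ b ++ wb u /\ hcond bar q01 q02 b u (size u - kappa).

Lemma hairpinE w : hairpin bar kappa L1 L2 w <-> exists u, hairpin_at u w.
Proof.
split=> [[g [a [b [-> [Ha HL]]]]] | [u [Hk [b [-> Hc]]]]].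
  have Ea := cat_take_drop kappa a.
  set a1 := take kappa a in Ea; set a2 := drop kappa a in Ea.
  have Sa1 : size a1 = kappa by rewrite size_take_min; lia.
  exists (g ++ a1); rewrite /hairpin_at size_cat Sa1 addnK leq_addl; split=> //.
  exists (a2 ++ b ++ wb a2); rewrite -Ea in HL *.
  split; first by rewrite !wbar_cat -!catA.
  rewrite /hcond drop_size_cat //.
  case: HL => [/HA1 | /L2_wbar] H; apply/orP; [left | right]; move: H; rewrite /dlang.
    by rewrite !wbar_cat -!catA.
  by rewrite !wbar_cat !(wbarK Hbar) -!catA.
have Eu := cat_take_drop (size u - kappa) u.
have Sd : size (drop (size u - kappa) u) = kappa by rewrite size_drop; lia.
move: Hc; rewrite /hcond.
set g := take _ u in Eu *; set a := drop _ u in Eu Sd * => Hc.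
exists g, a, b; split; first by rewrite -{1 2}Eu wbar_cat -!catA.
split; first by rewrite Sd.
case/orP: Hc => H; [left; apply/HA1 | right; apply/L2_wbar]; move: H; rewrite /dlang -{1}Eu.
  by rewrite -!catA.
by rewrite !wbar_cat !(wbarK Hbar) -!catA.
Qed.

Lemma hairpin_nfaE w :
  hairpin bar kappa L1 L2 w <-> exists u, nfa_lang bar kappa A1 A2 u /\ hairpin_at u w.
Proof.
rewrite hairpinE; split=> [[u [Hk [b [-> Hc]]]] | [u [_ Hu]]]; last by exists u.
pose P i := (i <= size u - kappa) && hcond bar q01 q02 b u i.
have [i /andP [Hi Hci] Hmin] := ex_minnP (ex_intro P _ (introT andP (conj (leqnn _) Hc))).
have Eu := cat_take_drop (i + kappa) u.
set u' := take _ u in Eu; set d := drop _ u in Eu.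
have Su' : size u' = i + kappa by rewrite size_take_min; lia.
exists u'; split; last first.
  split; first by rewrite Su' leq_addl.
  exists (d ++ b ++ wb d); rewrite Su' addnK hcond_cat ?Su' ?leq_addr // Eu.
  by rewrite -{1 2}Eu !wbar_cat -!catA.
apply/(nfa_langE Hbar Hkappa); exists (d ++ b ++ wb d); rewrite /run_inv /= Su' addnK leq_addl.
rewrite hcond_cat ?Su' ?leq_addr // Eu; split=> // j Hj; apply/negP => Hcj.
rewrite hcond_cat ?Su' in Hcj; last by lia.
rewrite Eu in Hcj.
by have := Hmin j; rewrite /P Hcj andbT; lia.
Qed.

Lemma nerode_finite_hairpin_at u : nerode_finite (hairpin_at u).
Proof.
have [Hk|Hk] := leqP kappa (size u); last first.
  by apply: nerode_finite_ext (nerode_finite0 S) => w; split=> // -[Hk']; lia.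
have HB := nerode_finite_bridge bar (dstar q01 u) (dstar q02 u) (wb (drop (size u - kappa) u)).
apply: nerode_finite_ext (nerode_finite_catl u (nerode_finite_catr (wb u) HB)) => w.
split=> [[v [-> [b [-> Hb]]]] | [_ [b [-> Hb]]]].
  by split=> //; exists b; split; last by move: Hb; rewrite /hcond -!dstar_cat.
exists (b ++ wb u); split=> //; exists b; split=> //.
by move: Hb; rewrite /hcond -!dstar_cat.
Qed.

Lemma hairpin_regular : finite_lang (nfa_lang bar kappa A1 A2) -> regular (hairpin bar kappa L1 L2).
Proof.
move=> [s Hs]; apply/nerode_finite_regular.
apply: nerode_finite_ext (nerode_finite_bigU (s := s) (fun u _ => nerode_finite_hairpin_at u)) => w.
split=> [[u [_ Hu]]|/hairpin_nfaE [u [/Hs Hu Hw]]]; last by exists u.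
by apply/hairpinE; exists u.
Qed.

End RegularCase.

Section Pumping.
Variables (S : Type) (bar : S -> S).
Hypothesis Hbar : involutive bar.
Local Notation wb := (wbar bar).

Definition pumped (x y r b : seq S) k l :=
  x ++ wpow y k ++ r ++ b ++ wb r ++ wpow (wb y) l ++ wb x.

Lemma wbar_pumped x y r b k l : wb (pumped x y r b k l) = pumped x y r (wb b) l k.
Proof. by rewrite /pumped !wbar_cat !wbar_wpow !(wbarK Hbar) -!catA. Qed.

Lemma size_pumped x y r b k l :
  size (pumped x y r b k l) = (size x + size r) * 2 + (k + l) * size y + size b.
Proof. rewrite /pumped !size_cat !size_wpow !size_wbar mulnDl; lia. Qed.

Lemma size_hairpin (g a c : seq S) :
  size (g ++ a ++ c ++ wb a ++ wb g) = size g * 2 + size a * 2 + size c.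
Proof. rewrite !size_cat !size_wbar; lia. Qed.

Lemma pumped_prefix_nonfinal (A : dfa S) (q0 : dstate A) x y r b k l K :
  let qb := dstar q0 (x ++ r ++ b) in let qr := dstar qb (wb r) in
  dstar (dstar q0 x) y = dstar q0 x -> dstar qr (wb y) = qr ->
  (forall m, K < m <= size r -> dstar qb (take m (wb r)) \notin dfinal A) ->
  (forall m, m <= size y -> dstar qr (take m (wb y)) \notin dfinal A) ->
  (forall m, m <= size x -> dstar qr (take m (wb x)) \notin dfinal A) ->
  forall n, size x + k * size y + size r + size b + K < n ->
  dstar q0 (take n (pumped x y r b k l)) \notin dfinal A.
Proof.
move=> qb qr Hy Hqr N1 N2 N3 n Hn.
have Sz : size (x ++ wpow y k ++ r ++ b) = size x + k * size y + size r + size b.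
  by rewrite !size_cat size_wpow !addnA.
rewrite /pumped [x ++ _](_ : _ = (x ++ wpow y k ++ r ++ b) ++ (wb r ++ wpow (wb y) l ++ wb x));
  last by rewrite -!catA.
rewrite take_cat Sz ltnNge (leq_trans (leq_addr K _) (ltnW Hn)) /= dstar_cat.
rewrite [dstar q0 _](_ : _ = qb) ?/qb; last by rewrite !dstar_cat dstar_wpow.
rewrite take_cat size_wbar; case: ltnP => Hnr; first by apply: N1; lia.
rewrite dstar_cat -/qr.
have [[m Hm ->] | [m Hm ->]] :=
  dstar_take_wpow (wb x) l (n - (size x + k * size y + size r + size b) - size r) Hqr.
  by apply: N2; rewrite -(size_wbar bar).
by apply: N3; rewrite -(size_wbar bar).
Qed.

Lemma pumped_long_prefix_nonfinal kappa (A : dfa S) (q0 : dstate A) x y r b :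
  let qr := dstar q0 (x ++ y ++ r ++ b ++ wb r) in
  kappa < size r -> dstar (dstar q0 x) y = dstar q0 x -> dstar qr (wb y) = qr ->
  (forall i, i < size (x ++ y ++ r) - kappa ->
     dstar q0 ((x ++ y ++ r) ++ b ++ wb (drop i (x ++ y ++ r))) \notin dfinal A) ->
  forall k l n, size x + k * size y + size r + size b + kappa < n ->
  dstar q0 (take n (pumped x y r b k l)) \notin dfinal A.
Proof.
move=> qr Hr Hy Hqr Hn k l; apply: pumped_prefix_nonfinal => //.
- by move: Hqr; rewrite /qr !dstar_cat Hy.
- move=> m /andP [Hm1 Hm2].
  have := Hn (size (x ++ y) + (size r - m)).
  rewrite catA drop_size_addn_cat take_wbar !dstar_cat Hy; apply; rewrite !size_cat; lia.
- move=> m Hm.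
  have /Hn : size x + (size y - m) < size (x ++ y ++ r) - kappa by rewrite !size_cat; lia.
  rewrite drop_size_addn_cat drop_cat.
  case: ltnP => Hym; first by rewrite take_wbar wbar_cat !dstar_cat Hy.
  have -> : m = 0 by lia.
  by rewrite take0 /= !dstar_cat Hy subn0 subnn drop0.
- move=> m Hm; move: Hqr; rewrite /qr !dstar_cat Hy => Hqr.
  have /Hn : size x - m < size (x ++ y ++ r) - kappa by rewrite !size_cat; lia.
  rewrite drop_cat.
  case: ltnP => Hxm; first by rewrite take_wbar !wbar_cat !dstar_cat Hy Hqr.
  have -> : m = 0 by lia.
  by rewrite take0 /= subn0 subnn drop0 wbar_cat !dstar_cat Hy Hqr.
Qed.

(* Unbalanced pumping makes the left part of every hairpin factorisation
   longer than the threshold beyond which prefixes are rejected. *)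
Lemma pumped_hairpin_prefix_nonfinal kappa (A : dfa S) (q0 : dstate A) x y r b k l g a c :
  (forall n, size x + k * size y + size r + size b + kappa < n ->
     dstar q0 (take n (pumped x y r b k l)) \notin dfinal A) ->
  size b < (l - k) * size y -> kappa <= size a ->
  pumped x y r b k l = g ++ a ++ c ++ wb a ++ wb g ->
  dstar q0 (g ++ a ++ c ++ wb a) \notin dfinal A.
Proof.
move=> Hn Hb Ha E.
have E' : pumped x y r b k l = (g ++ a ++ c ++ wb a) ++ wb g by rewrite E -!catA.
have := Hn (size (g ++ a ++ c ++ wb a)); rewrite E' take_size_cat //; apply.
have := size_pumped x y r b k l; rewrite E size_hairpin mulnBl in Hb *.
rewrite !size_cat size_wbar !mulnDl; lia.
Qed.

Lemma size_pumped_hairpin_sides x y r b k l g a c : 0 < size y ->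
  pumped x y r b k l = g ++ a ++ c ++ wb a ++ wb g ->
  k + l <= (size (g ++ a ++ c ++ wb a)).*2 /\ k + l <= (size (a ++ c ++ wb a ++ wb g)).*2.
Proof.
move=> Hy E; have := size_pumped x y r b k l; rewrite E size_hairpin !size_cat !size_wbar.
have : k + l <= (k + l) * size y by rewrite leq_pmulr.
lia.
Qed.

End Pumping.

Section NonRegularCase.
Variables (S : finType) (bar : S -> S).
Hypothesis Hbar : involutive bar.
Variable kappa : nat.
Variables (L1 L2 : language S) (A1 A2 : dfa S).
Hypothesis HA1 : forall w, dlang A1 w <-> L1 w.
Hypothesis HA2 : forall w, dlang A2 w <-> exists v, L2 v /\ w = wbar bar v.
Local Notation wb := (wbar bar).
Local Notation q01 := (dinit A1).
Local Notation q02 := (dinit A2).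
Local Notation pumped := (pumped bar).

Variables x y r b : seq S.
Hypothesis y_gt0 : 0 < size y.
Hypothesis r_gt_kappa : kappa < size r.
Hypothesis y_loop1 : dstar (dstar q01 x) y = dstar q01 x.
Hypothesis y_loop2 : dstar (dstar q02 x) y = dstar q02 x.
Hypothesis wbar_y_loop1 : let q := dstar q01 (x ++ y ++ r ++ b ++ wb r) in dstar q (wb y) = q.
Hypothesis wbar_y_loop2 : let q := dstar q02 (x ++ y ++ r ++ wb b ++ wb r) in dstar q (wb y) = q.
Hypothesis stem_adm : hcond bar q01 q02 b (x ++ y ++ r) (size (x ++ y ++ r) - kappa).
Hypothesis stem_max :
  forall i, i < size (x ++ y ++ r) - kappa -> ~~ hcond bar q01 q02 b (x ++ y ++ r) i.

Lemma pumped_hairpin k : hairpin bar kappa L1 L2 (pumped x y r b k k).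
Proof.
have Er := cat_take_drop (size r - kappa) r.
move: stem_adm; rewrite /hcond.
have -> : drop (size (x ++ y ++ r) - kappa) (x ++ y ++ r) = drop (size r - kappa) r.
  rewrite catA (_ : size _ - kappa = size (x ++ y) + (size r - kappa)) ?drop_size_addn_cat //.
  by rewrite !size_cat; lia.
set g := take _ r in Er *; set a := drop _ r in Er * => Hc.
exists (x ++ wpow y k ++ g), a, b; split; first by rewrite /pumped -Er !wbar_cat wbar_wpow -!catA.
split; first by rewrite /a size_drop; lia.
case/orP: Hc => H; [left; apply/HA1 | right; apply/(L2_wbar Hbar HA2)]; move: H; rewrite /dlang.
  by rewrite -{1}Er !dstar_cat y_loop1 dstar_wpow.
by rewrite -{1}Er !wbar_cat !(wbarK Hbar) !dstar_cat y_loop2 dstar_wpow.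
Qed.

Lemma pumped_prefix_nonfinal1 k l n : size x + k * size y + size r + size b + kappa < n ->
  dstar q01 (take n (pumped x y r b k l)) \notin dfinal A1.
Proof.
apply: pumped_long_prefix_nonfinal => // i /stem_max.
by rewrite /hcond negb_or => /andP [].
Qed.

Lemma pumped_prefix_nonfinal2 k l n : size x + k * size y + size r + size (wb b) + kappa < n ->
  dstar q02 (take n (pumped x y r (wb b) k l)) \notin dfinal A2.
Proof.
apply: pumped_long_prefix_nonfinal => // i /stem_max.
by rewrite /hcond negb_or => /andP [].
Qed.

Lemma pumped_not_regular : finite_lang L1 \/ finite_lang L2 -> ~ regular (hairpin bar kappa L1 L2).
Proof.
move=> Hfin [D HD].
have transfer k k' l : dstar (dinit D) (x ++ wpow y k) = dstar (dinit D) (x ++ wpow y k') ->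
    hairpin bar kappa L1 L2 (pumped x y r b k l) -> hairpin bar kappa L1 L2 (pumped x y r b k' l).
  by move=> E /HD; rewrite /dlang /pumped catA dstar_cat E -dstar_cat -catA => /HD.
have [M HM] : exists M, (forall w, L1 w -> size w <= M) \/ (forall w, L2 w -> size w <= M).
  by case: Hfin => /finite_lang_bounded [M HM]; exists M; [left | right].
have [l1 [l2 [HM1 Hgap E]]] :=
  pigeon_gap (fun l => dstar (dinit D) (x ++ wpow y l)) M.*2.+1 (size b).
have Hb : size b < (l2 - l1) * size y.
  by apply: leq_trans (leq_pmulr _ y_gt0); lia.
case: HM => HM.
- have [g [a [c [Ew [Ha HL]]]]] := transfer _ _ l1 E (pumped_hairpin l1).
  have [Hs1 _] := size_pumped_hairpin_sides y_gt0 Ew.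
  case: HL => [/HM | /(L2_wbar Hbar HA2)]; first lia.
  have Ew' : pumped x y r (wb b) l1 l2 = g ++ a ++ wb c ++ wb a ++ wb g.
    by rewrite -wbar_pumped // Ew !wbar_cat !(wbarK Hbar) -!catA.
  apply/negP; rewrite /dlang !wbar_cat !(wbarK Hbar) -!catA.
  apply: (pumped_hairpin_prefix_nonfinal _ _ Ha Ew'); last by rewrite size_wbar.
  by move=> n; apply: pumped_prefix_nonfinal2.
- have [g [a [c [Ew [Ha HL]]]]] := transfer _ _ l2 (esym E) (pumped_hairpin l2).
  have [_ Hs2] := size_pumped_hairpin_sides y_gt0 Ew.
  case: HL => [/HA1 | /HM]; last lia.
  apply/negP; apply: (pumped_hairpin_prefix_nonfinal _ Hb Ha Ew).
  by move=> n; apply: pumped_prefix_nonfinal1.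
Qed.

End NonRegularCase.

Lemma hairpin_not_regular (S : finType) (bar : S -> S) (kappa : nat) (L1 L2 : language S)
    (A1 A2 : dfa S) :
  involutive bar -> 0 < kappa ->
  (forall w, dlang A1 w <-> L1 w) ->
  (forall w, dlang A2 w <-> exists v, L2 v /\ w = wbar bar v) ->
  ~ finite_lang (nfa_lang bar kappa A1 A2) ->
  finite_lang L1 \/ finite_lang L2 -> ~ regular (hairpin bar kappa L1 L2).
Proof.
move=> Hbar Hkappa HA1 HA2 Hinf.
pose T : finType := ((dstate A1 * dstate A2) * dstate A1 * dstate A2)%type.
have [u [/(nfa_langE Hbar Hkappa) [b [Hk Hc Hn]] Hsz]] :=
  infinite_lang_long_word Hinf (#|T| + kappa + 1).
pose q1 := dstar (dinit A1) (u ++ b); pose q2 := dstar (dinit A2) (u ++ wbar bar b).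
pose f i : T := ((dstar (dinit A1) (take i u), dstar (dinit A2) (take i u)),
                 dstar q1 (wbar bar (drop i u)), dstar q2 (wbar bar (drop i u))).
have [i [j [/andP [Hij Hjm] [E1 E2 E3 E4]]]] : exists i j, i < j < size u - kappa /\ f i = f j.
  by apply: pigeon_nat; lia.
pose x := take i u; pose y := drop i (take j u); pose r := drop j u.
have Exy : x ++ y = take j u by rewrite /x -(@take_takel _ i j u (ltnW Hij)) cat_take_drop.
have Eu : x ++ y ++ r = u by rewrite catA Exy cat_take_drop.
have Sx : size x = i by rewrite size_take_min; lia.
have Ed : drop i u = y ++ r by rewrite -Eu -{1}Sx drop_size_cat.
apply: (@pumped_not_regular _ _ Hbar kappa _ _ _ _ HA1 HA2 x y r b); rewrite ?Eu //.
- by rewrite size_drop size_take_min; lia.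
- by rewrite size_drop; lia.
- by rewrite -dstar_cat Exy.
- by rewrite -dstar_cat Exy.
- by move: E3; rewrite /q1 Ed -/r wbar_cat dstar_cat -Eu -!catA /= !dstar_cat.
- by move: E4; rewrite /q2 Ed -/r wbar_cat dstar_cat -Eu -!catA /= !dstar_cat.
Qed.

Theorem proposition1 (S : finType) (bar : S -> S) (Hbar : involutive bar)
  (HS : 1 < #|S|) (kappa : nat) (Hkappa : 0 < kappa)
  (L1 L2 : language S) (A1 A2 : dfa S)
  (HA1 : forall w, dlang A1 w <-> L1 w)
  (HA2 : forall w, dlang A2 w <-> exists v, L2 v /\ w = wbar bar v) :
  (finite_lang (nfa_lang bar kappa A1 A2) -> regular (hairpin bar kappa L1 L2)) /\
  (~ finite_lang (nfa_lang bar kappa A1 A2) ->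
     finite_lang L1 \/ finite_lang L2 -> ~ regular (hairpin bar kappa L1 L2)).
Proof.
split; first exact: (hairpin_regular Hbar Hkappa HA1 HA2).
exact: hairpin_not_regular.
Qed.
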